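(* Let $\mathcal{V},\bar{\mathcal{V}}$ be disjoint finite sets with $|\mathcal{V}|=N$, $|\bar{\mathcal{V}}|=M$, and let $G:2^{\mathcal{V}\cup\bar{\mathcal{V}}}\to\mathbb{R}$ be a submodular, nonnegative set function with $G(\emptyset)=0$ and $G(\mathcal{V}\cup\bar{\mathcal{V}})=0$, with Lovász extension $g(\mathbf{x},\bar{\mathbf{x}})$ ($\mathbf{x}\in\mathbb{R}^N$ indexed by $\mathcal{V}$, $\bar{\mathbf{x}}\in\mathbb{R}^M$ indexed by $\bar{\mathcal{V}}$). Let $\mathbf{x}\in\mathbb{R}^N$ have minimum entry $a$ and maximum entry $b$. Then $g(\mathbf{x},\bar{\mathbf{x}})\ge g(\mathbf{x},\mathcal{P}_{a,b}(\bar{\mathbf{x}}))$ for every $\bar{\mathbf{x}}\in\mathbb{R}^M$. Consequently, for any $a'<a$ and $b'>b$, $$\min_{\bar{\mathbf{x}}\in\mathbb{R}^M}g(\mathbf{x},\bar{\mathbf{x}})=\min_{\bar{\mathbf{x}}\in[a',b']^M}g(\mathbf{x},\bar{\mathbf{x}})=\min_{\bar{\mathbf{x}}\in[a,b]^M}g(\mathbf{x},\bar{\mathbf{x}}).$$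
   Context: Lovász extension: for a set function $F:2^{[n]}\to\mathbb{R}$ with $F(\emptyset)=0$, and $\mathbf{x}\in\mathbb{R}^n$ with entries sorted as $x_{i_1}\ge\cdots\ge x_{i_n}$, $f(\mathbf{x})=\sum_{j=1}^{n-1}F(\{i_1,\dots,i_j\})(x_{i_j}-x_{i_{j+1}})+F([n])x_{i_n}$. A set function $F$ is submodular if $F(\mathcal{S}_1)+F(\mathcal{S}_2)\ge F(\mathcal{S}_1\cup\mathcal{S}_2)+F(\mathcal{S}_1\cap\mathcal{S}_2)$ for all $\mathcal{S}_1,\mathcal{S}_2$. $\mathcal{P}_{a,b}(\bar{\mathbf{x}})$ denotes the vector obtained by projecting each entry of $\bar{\mathbf{x}}$ onto the interval $[a,b]$. *)

From HB Require Import structures.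
From mathcomp Require Import all_boot all_order all_algebra.
From mathcomp Require Import reals.
Set Implicit Arguments. Unset Strict Implicit. Unset Printing Implicit Defensive.
Import Order.TTheory GRing.Theory Num.Theory.
Local Open Scope ring_scope.

Section Defs.
Variable R : realType.

Definition submodular (T : finType) (F : {set T} -> R) : Prop :=
  forall S1 S2 : {set T}, F (S1 :|: S2) + F (S1 :&: S2) <= F S1 + F S2.

(* Lovasz extension, literally as in the paper: sort the entries of x
   decreasingly, x_{i_1} >= ... >= x_{i_n}, and set
   f(x) = sum_{j=1}^{n-1} F({i_1..i_j}) (x_{i_j} - x_{i_{j+1}}) + F([n]) x_{i_n}.
   (Empty ground set: value 0.) *)
Definition lovasz (T : finType) (F : {set T} -> R) (x : T -> R) : R :=
  let s := sort (fun i j => x j <= x i) (enum T) in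
  match s with
  | [::] => 0
  | i0 :: _ =>
      \sum_(j < (size s).-1)
         F [set k in take j.+1 s] * (x (nth i0 s j) - x (nth i0 s j.+1))
      + F setT * x (last i0 s)
  end.

Definition joinv (N M : nat) (x : 'I_N -> R) (xb : 'I_M -> R) : 'I_N + 'I_M -> R :=
  fun k => match k with inl i => x i | inr j => xb j end.

Definition gext (N M : nat) (G : {set ('I_N + 'I_M)} -> R)
  (x : 'I_N -> R) (xb : 'I_M -> R) : R := lovasz G (joinv x xb).

Definition proj_ab (M : nat) (a b : R) (xb : 'I_M -> R) : 'I_M -> R :=
  fun j => Num.min (Num.max (xb j) a) b.

Definition is_min_on (A : Type) (S : A -> Prop) (f : A -> R) (m : R) : Prop :=
  (exists2 y, S y & f y = m) /\ (forall y, S y -> m <= f y).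

Definition box (M : nat) (lo hi : R) (xb : 'I_M -> R) : Prop :=
  forall j, lo <= xb j <= hi.

End Defs.

(* The Lovasz extension can be read off any decreasing list of thresholds
   t_0 >= ... >= t_m containing all values of z:
     g(z) = sum_j G({z >= t_j}) (t_j - t_(j+1)) + G(V) t_m.
   Clamping xbar to [a, b], while x already lies in [a, b], replaces the
   superlevel sets above b by the empty set and those at or below a by V, and
   leaves the others unchanged; since G >= 0 = G(empty) = G(V), g cannot grow.
   Between the two neighbouring values q < u < p of a value u of z, g is affine
   in the common value of the entries equal to u, so moving them to p or to q
   does not increase g.  Repeating this, every xbar in [a, b]^M is beaten by
   one whose entries are entries of x, and there are finitely many such xbar. *)

From HB Require Import structures.
From mathcomp Require Import all_boot all_order all_algebra.
From mathcomp Require Import reals.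
From mathcomp Require boolp.
Set Implicit Arguments. Unset Strict Implicit. Unset Printing Implicit Defensive.
Import Order.TTheory GRing.Theory Num.Theory.
Local Open Scope ring_scope.

Section StrictlyDecreasing.
Variable R : realType.

Let gt_trans : transitive (>%R : rel R).
Proof. by move=> y x w lt_yx lt_wy; exact: lt_trans lt_wy lt_yx. Qed.

Lemma gt_sorted_uniq_ge (s : seq R) : sorted >%R s = uniq s && sorted >=%R s.
Proof. by have := lt_sorted_uniq_le (rev s); rewrite rev_uniq !rev_sorted. Qed.

Lemma gt_sorted_ge (s : seq R) : sorted >%R s -> sorted >=%R s.
Proof. by rewrite gt_sorted_uniq_ge => /andP[]. Qed.

Lemma sorted_gt_neighbours (s : seq R) u : sorted >%R s -> u \in s ->
  (exists2 v, v \in s & u < v) -> (exists2 v, v \in s & v < u) ->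
  exists w1 p q w2, s = w1 ++ [:: p, u, q & w2].
Proof.
move=> s_sorted u_s; case/splitPr: u_s s_sorted => w w'.
rewrite (sorted_pairwise gt_trans) pairwise_cat pairwise_cons.
case/and4P=> /allrelP gt_w _ /allP gt_w' _ [v v_s lt_uv] [v' v'_s lt_v'u].
have {}gt_w y : y \in w -> u < y by move=> y_w; apply: gt_w; rewrite ?mem_head.
case/lastP: w gt_w v_s v'_s => [|w p] gt_w v_s v'_s.
  move: v_s; rewrite inE => /predU1P[v_u|/gt_w'/(lt_trans lt_uv)]; last by rewrite ltxx.
  by move: lt_uv; rewrite v_u ltxx.
case: w' gt_w' v_s v'_s => [|q w'] gt_w' v_s v'_s.
  move: v'_s; rewrite mem_cat mem_seq1 => /orP[/gt_w/(lt_trans lt_v'u)|/eqP v'_u].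
    by rewrite ltxx.
  by move: lt_v'u; rewrite v'_u ltxx.
by exists w, p, q, w'; rewrite -cats1 -catA.
Qed.

Lemma sorted_gt_cat3 (w1 w2 : seq R) (p u q : R) : sorted >%R (w1 ++ [:: p, u, q & w2]) ->
  [/\ {in w1, forall t, p < t}, u < p, q < u & {in w2, forall t, t < q}].
Proof.
rewrite (sorted_pairwise gt_trans) pairwise_cat allrel_consr.
case/and3P=> /andP[/allP gt_w1 _] _; rewrite !pairwise_cons /=.
by case/and4P=> /and3P[lt_up _ _] /andP[lt_qu _] /allP lt_w2 _.
Qed.

End StrictlyDecreasing.

Section LovaszLevels.
Variables (R : realType) (T : finType) (F : {set T} -> R).

Definition superlevel (z : T -> R) (t : R) : {set T} := [set k | t <= z k].

Fixpoint lovasz_seq (lv : R -> {set T}) (w : seq R) : R :=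
  match w with
  | [::] => 0
  | t :: w' => if w' is t' :: _ then F (lv t) * (t - t') + lovasz_seq lv w'
               else F setT * t
  end.

Fixpoint lovasz_pre (lv : R -> {set T}) (w : seq R) (h : R) : R :=
  if w is t :: w' then F (lv t) * (t - head h w') + lovasz_pre lv w' h else 0.

Lemma lovasz_seq_cat lv w h r :
  lovasz_seq lv (w ++ h :: r) = lovasz_pre lv w h + lovasz_seq lv (h :: r).
Proof.
elim: w => [|t [|t' w] IH] /=; first by rewrite add0r.
  by rewrite addr0.
by move: IH => /= ->; rewrite addrA.
Qed.

Lemma lovasz_seq_nth lv d t r : lovasz_seq lv (t :: r) =
  \sum_(j < size r) F (lv (nth d (t :: r) j)) * (nth d (t :: r) j - nth d (t :: r) j.+1)
  + F setT * last t r.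
Proof.
elim: r t => [|t' r IH] t /=; first by rewrite big_ord0 add0r.
by rewrite big_ord_recl -addrA; move: (IH t') => /= ->.
Qed.

Lemma eq_lovasz_seq lv lv' w : {in w, lv =1 lv'} -> lovasz_seq lv w = lovasz_seq lv' w.
Proof.
elim: w => [|t w IH] // eq_lv.
have eq_lv_w : {in w, lv =1 lv'} by move=> s s_w; apply: eq_lv; rewrite inE s_w orbT.
by rewrite /= eq_lv ?mem_head // IH.
Qed.

Lemma eq_lovasz_pre lv lv' w h : {in w, lv =1 lv'} -> lovasz_pre lv w h = lovasz_pre lv' w h.
Proof.
elim: w => [|t w IH] //= eq_lv.
rewrite eq_lv ?mem_head // IH // => s s_w; apply: eq_lv; by rewrite inE s_w orbT.
Qed.

Lemma ler_lovasz_seq lv lv' w : sorted >=%R w -> (forall t, F (lv' t) <= F (lv t)) ->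
  lovasz_seq lv' w <= lovasz_seq lv w.
Proof.
elim: w => [|t [|t' w] IH] //= /andP[le_t't w_sorted] le_F.
by rewrite lerD ?IH // ler_wpM2r ?subr_ge0.
Qed.

Lemma lovasz_seq_sorted_values (z : T -> R) (k0 : T) :
  lovasz F z = lovasz_seq (superlevel z) (map z (sort (fun i j => z j <= z i) (enum T))).
Proof.
rewrite /lovasz; set s := sort _ _.
have s_sorted : sorted (fun i j => z j <= z i) s by apply: sort_sorted => i j; exact: le_total.
have s_all k : k \in s by rewrite mem_sort mem_enum.
case: s s_sorted s_all => [_ /(_ k0)//|i0 s'] s_sorted s_all.
rewrite map_cons (lovasz_seq_nth _ (z i0)) size_map last_map; congr (_ + _).
apply: eq_bigr => j _; set s := i0 :: s'.
have z_mono p q : (p <= q < size s)%N -> z (nth i0 s q) <= z (nth i0 s p).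
  case/andP=> le_pq lt_q; apply: (sorted_leq_nth _ _ i0 s_sorted) => //.
  - by move=> y x w /= h1 h2; apply: le_trans h1.
  - exact: leq_ltn_trans lt_q.
have lt_j1 : (j.+1 < size s)%N by rewrite /= ltnS.
rewrite -map_cons !(nth_map i0) ?(ltnW lt_j1) //.
have [->|neq] := eqVneq (z (nth i0 s j)) (z (nth i0 s j.+1)); first by rewrite subrr !mulr0.
have lt_step : z (nth i0 s j.+1) < z (nth i0 s j).
  by rewrite lt_neqAle eq_sym neq z_mono ?leqnSn.
congr (F _ * _); apply/setP => k; rewrite !in_set (in_take _ (s_all k)).
have k_idx : nth i0 s (index k s) = k by rewrite nth_index.
have idx_lt : (index k s < size s)%N by rewrite index_mem.
case: ltnP => [lt_kj|le_jk].
  apply/esym; rewrite -[X in _ <= z X]k_idx; apply: z_mono.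
  by rewrite -ltnS lt_kj ltnW.
apply/esym/negbTE; rewrite -ltNge -[X in z X < _]k_idx; apply: le_lt_trans lt_step.
by apply: z_mono; rewrite le_jk.
Qed.

Hypothesis F0 : F set0 = 0.

Lemma lovasz_seq_insert_top (k0 : T) z t r : (forall k, z k \in r) -> path >=%R t r ->
  lovasz_seq (superlevel z) (t :: r) = lovasz_seq (superlevel z) r.
Proof.
case: r => [/(_ k0)//|s r] z_r; rewrite (path_sortedE ge_trans).
case/andP=> /allP t_ge s_path /=.
have le_st : s <= t by apply: t_ge; rewrite mem_head.
have [->|neq] := eqVneq t s; first by rewrite subrr mulr0 add0r.
suff -> : superlevel z t = set0 by rewrite F0 mul0r add0r.
apply/setP => k; rewrite !inE; apply/negbTE; rewrite -ltNge.
apply: le_lt_trans (_ : s < t); last by rewrite lt_neqAle eq_sym neq.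
move: (z_r k); rewrite inE => /predU1P[->//|z_k_r].
by move: s_path; rewrite /= (path_sortedE ge_trans) => /andP[/allP/(_ _ z_k_r)].
Qed.

Lemma lovasz_seq_insert_below z s t r : t < s -> path >=%R t r ->
  (forall k, (s <= z k) || (z k \in r)) ->
  lovasz_seq (superlevel z) (s :: t :: r) = lovasz_seq (superlevel z) (s :: r).
Proof.
case: r => [|s' r] /= lt_ts t_path z_vals.
  suff -> : superlevel z s = setT by rewrite mulrBr subrK.
  by apply/setP => k; rewrite !inE; move: (z_vals k); rewrite orbF.
case/andP: t_path => le_s't s'_path.
have [->|neq] := eqVneq t s'; first by rewrite subrr mulr0 add0r.
suff -> : superlevel z t = superlevel z s by rewrite addrA -mulrDr addrA subrK.
have lt_s't : s' < t by rewrite lt_neqAle eq_sym neq.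
apply/setP => k; rewrite !inE; case/orP: (z_vals k) => [le_s|z_r].
  by rewrite le_s (le_trans (ltW lt_ts) le_s).
have le_s' : z k <= s'.
  move: z_r; rewrite inE => /predU1P[->//|z_r].
  by move: s'_path; rewrite (path_sortedE ge_trans) => /andP[/allP/(_ _ z_r)].
by rewrite !leNgt (le_lt_trans le_s' lt_s't) (le_lt_trans le_s' (lt_trans lt_s't lt_ts)).
Qed.

Lemma lovasz_seq_insert_cat (k0 : T) z w1 t r : sorted >=%R (w1 ++ r) ->
  {in w1, forall s, t < s} -> {in r, forall s, s <= t} -> (forall k, z k \in w1 ++ r) ->
  lovasz_seq (superlevel z) (w1 ++ t :: r) = lovasz_seq (superlevel z) (w1 ++ r).
Proof.
move=> w_sorted gt_w1 le_r z_w.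
have t_path : path >=%R t r.
  by rewrite (path_sortedE ge_trans) (cat_sorted2 w_sorted) andbT; apply/allP.
case/lastP: w1 w_sorted gt_w1 z_w => [|w1 s] w_sorted gt_w1 z_w.
  by move: z_w; rewrite !cat0s => /(lovasz_seq_insert_top k0); apply.
rewrite -cats1 -!catA /= !lovasz_seq_cat lovasz_seq_insert_below //.
  by apply: gt_w1; rewrite mem_rcons mem_head.
move=> k; move: (z_w k); rewrite mem_cat => /orP[z_w1|->]; last by rewrite orbT.
move: (cat_sorted2 w_sorted).1; rewrite (sorted_pairwise ge_trans) pairwise_rcons.
case/andP=> /allP le_s _; apply/orP; left.
by move: z_w1; rewrite mem_rcons inE => /predU1P[->|/le_s].
Qed.

Lemma lovasz_seq_insert (k0 : T) z w t : sorted >=%R w -> (forall k, z k \in w) ->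
  lovasz_seq (superlevel z) (sort >=%R (t :: w)) = lovasz_seq (superlevel z) w.
Proof.
move=> w_sorted z_w.
set w1 := [seq s <- w | t < s]; set r := [seq s <- w | ~~ (t < s)].
have w_pairwise : pairwise >=%R w by rewrite -(sorted_pairwise ge_trans).
have gt_w1 : {in w1, forall s, t < s} by move=> s; rewrite mem_filter => /andP[].
have le_r : {in r, forall s, s <= t} by move=> s; rewrite mem_filter -leNgt => /andP[].
have w1_ge_r : allrel >=%R w1 r.
  by apply/allrelP => u v /gt_w1/ltW le_tu /le_r le_vt; exact: le_trans le_vt le_tu.
have w_split : w1 ++ r = w.
  apply: (sorted_eq ge_trans ge_anti); last by rewrite perm_filterC.
  - by rewrite (sorted_pairwise ge_trans) pairwise_cat w1_ge_r !pairwise_filter.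
  - exact: w_sorted.
have sort_split : sort >=%R (t :: w) = w1 ++ t :: r.
  apply: (sorted_eq ge_trans ge_anti); first exact: (sort_sorted ge_total).
  - rewrite (sorted_pairwise ge_trans) pairwise_cat pairwise_cons allrel_consr w1_ge_r.
    rewrite !pairwise_filter // !andbT; apply/and3P; split=> //; apply/allP.
      by move=> u /gt_w1/ltW.
    exact: le_r.
  - by rewrite perm_sort -{1}w_split perm_sym (perm_catCA w1 [:: t] r).
by rewrite sort_split -[in RHS]w_split lovasz_seq_insert_cat // w_split.
Qed.

Lemma lovasz_seq_sort_cat (k0 : T) z u w : sorted >=%R w -> (forall k, z k \in w) ->
  lovasz_seq (superlevel z) (sort >=%R (u ++ w)) = lovasz_seq (superlevel z) w.
Proof.
move=> w_sorted z_w; elim: u => [|t u IH]; first by rewrite sorted_sort //; exact: ge_trans.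
have -> : sort >=%R ((t :: u) ++ w) = sort >=%R (t :: sort >=%R (u ++ w)).
  by apply/(perm_sortP ge_total ge_trans ge_anti); rewrite /= perm_cons perm_sym perm_sort.
rewrite (lovasz_seq_insert k0) ?(sort_sorted ge_total) // => k.
by rewrite mem_sort mem_cat z_w orbT.
Qed.

(* [k0] witnesses that [T] is nonempty: otherwise [lovasz F z = 0] while the
   right-hand side is arbitrary. *)
Lemma lovasz_superlevelE (k0 : T) z w : sorted >=%R w -> (forall k, z k \in w) ->
  lovasz F z = lovasz_seq (superlevel z) w.
Proof.
move=> w_sorted z_w; rewrite (lovasz_seq_sorted_values z k0).
set w0 := map z _.
have w0_sorted : sorted >=%R w0 by rewrite sorted_map; apply: sort_sorted => i j; exact: le_total.
have z_w0 k : z k \in w0 by rewrite map_f // mem_sort mem_enum.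
rewrite -(lovasz_seq_sort_cat k0 w w0_sorted z_w0) -(lovasz_seq_sort_cat k0 w0 w_sorted z_w).
by congr lovasz_seq; apply/(perm_sortP ge_total ge_trans ge_anti); rewrite perm_catC.
Qed.

Lemma ler_lovasz (k0 : T) z z' : (forall t, F (superlevel z' t) <= F (superlevel z t)) ->
  lovasz F z' <= lovasz F z.
Proof.
move=> le_F; set w := sort >=%R (map z (enum T) ++ map z' (enum T)).
have w_sorted : sorted >=%R w by exact: (sort_sorted ge_total).
rewrite !(lovasz_superlevelE k0 w_sorted) ?ler_lovasz_seq // => k;
  by rewrite mem_sort mem_cat map_f ?mem_enum ?orbT.
Qed.

Definition relabel (z : T -> R) (u c : R) (k : T) : R := if z k == u then c else z k.

Lemma superlevel_relabel z u c t :
  (t <= c) = (t <= u) -> superlevel (relabel z u c) t = superlevel z t.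
Proof. by move=> eq_tc; apply/setP => k; rewrite !inE /relabel; case: eqP => // ->. Qed.

Lemma superlevel_relabel_gap z q u p c t :
  (forall k, q < z k < p -> z k = u) -> q < u < p -> q < t <= p ->
  superlevel (relabel z u c) t = if t <= c then superlevel z u else superlevel z p.
Proof.
move=> gap /andP[lt_qu lt_up] /andP[lt_qt le_tp].
apply/setP => k; rewrite [k \in superlevel (relabel _ _ _) _]inE /relabel.
case: eqP => [zk_u|neq].
  by have [_|_] := leP t c; rewrite inE zk_u ?lexx // leNgt lt_up.
have [le_pz|lt_zp] := leP p (z k).
  rewrite (le_trans le_tp le_pz).
  by case: ifP; rewrite inE ?le_pz ?(le_trans (ltW lt_up) le_pz).
have le_zq : z k <= q.
  by rewrite leNgt; apply/negP => lt_qz; apply: neq; apply: gap; rewrite lt_qz lt_zp.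
have gt_q y : q < y -> (y <= z k) = false by move=> lt_qy; rewrite leNgt (le_lt_trans le_zq lt_qy).
by case: ifP; rewrite inE !gt_q // (lt_trans lt_qu lt_up).
Qed.

Lemma lovasz_cat3 (k0 : T) z w1 p u q w2 :
  sorted >=%R (w1 ++ [:: p, u, q & w2]) -> (forall k, z k \in w1 ++ [:: p, u, q & w2]) ->
  lovasz F z = lovasz_pre (superlevel z) w1 p + (F (superlevel z p) * (p - u) +
    (F (superlevel z u) * (u - q) + lovasz_seq (superlevel z) (q :: w2))).
Proof. by move=> W_sorted z_W; rewrite (lovasz_superlevelE k0 W_sorted z_W) lovasz_seq_cat. Qed.

Lemma lovasz_relabel_cat3 (k0 : T) z w1 p u q w2 c :
  sorted >%R (w1 ++ [:: p, u, q & w2]) -> (forall k, z k \in w1 ++ [:: p, u, q & w2]) ->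
  c \in [:: p; q] ->
  lovasz F (relabel z u c) = lovasz_pre (superlevel z) w1 p +
    (F (superlevel (relabel z u c) p) * (p - u) +
    (F (superlevel (relabel z u c) u) * (u - q) + lovasz_seq (superlevel z) (q :: w2))).
Proof.
move=> W_sorted z_W c_pq; have [gt_w1 lt_up lt_qu lt_w2] := sorted_gt_cat3 W_sorted.
have [le_cp le_qc] : c <= p /\ q <= c.
  by move: c_pq; rewrite !inE => /orP[] /eqP->; rewrite lexx (ltW (lt_trans lt_qu lt_up)).
rewrite (lovasz_cat3 k0 (gt_sorted_ge W_sorted)) => [|k]; last first.
  rewrite /relabel; case: eqP => // _.
  by move: c_pq; rewrite !inE => /orP[] /eqP->; rewrite mem_cat !inE eqxx !orbT.
congr (_ + (_ + (_ + _))).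
  apply: eq_lovasz_pre => t /gt_w1 lt_pt; apply: superlevel_relabel.
  by rewrite !leNgt (le_lt_trans le_cp lt_pt) (lt_trans lt_up lt_pt).
apply: eq_lovasz_seq => t; rewrite inE => /predU1P[->|/lt_w2/ltW le_tq].
  by apply: superlevel_relabel; rewrite le_qc (ltW lt_qu).
by apply: superlevel_relabel; rewrite (le_trans le_tq le_qc) (le_trans le_tq (ltW lt_qu)).
Qed.

Lemma lovasz_relabel_step (k0 : T) z w1 p u q w2 :
  let W := w1 ++ [:: p, u, q & w2] in
  sorted >%R W -> (forall k, z k \in W) ->
  exists c, [/\ c \in W, c != u & lovasz F (relabel z u c) <= lovasz F z].
Proof.
move=> W W_sorted z_W; have [gt_w1 lt_up lt_qu lt_w2] := sorted_gt_cat3 W_sorted.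
have lt_qp := lt_trans lt_qu lt_up.
have gap k : q < z k < p -> z k = u.
  case/andP=> lt_qz lt_zp; move: (z_W k); rewrite mem_cat => /orP[/gt_w1|].
    by move/(lt_trans lt_zp); rewrite ltxx.
  rewrite !inE => /or4P[/eqP e|/eqP->//|/eqP e|/lt_w2/(lt_trans lt_qz)].
  - by move: lt_zp; rewrite e ltxx.
  - by move: lt_qz; rewrite e ltxx.
  - by rewrite ltxx.
have rel_gap c t : q < t <= p -> superlevel (relabel z u c) t =
    if t <= c then superlevel z u else superlevel z p.
  by apply: superlevel_relabel_gap; rewrite ?lt_qu.
rewrite (lovasz_cat3 k0 (gt_sorted_ge W_sorted) z_W).
have [le_Fup|lt_Fpu] := leP (F (superlevel z u)) (F (superlevel z p)).
  exists p; split; [by rewrite mem_cat mem_head orbT | by rewrite gt_eqF |].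
  rewrite (lovasz_relabel_cat3 k0 W_sorted z_W) ?mem_head //.
  rewrite !rel_gap ?lexx ?(ltW lt_up) ?lt_qu ?lt_qp //.
  by rewrite lerD2l lerD2r ler_wpM2r // subr_ge0 ltW.
exists q; split; [by rewrite mem_cat !inE eqxx !orbT | by rewrite lt_eqF |].
rewrite (lovasz_relabel_cat3 k0 W_sorted z_W) ?inE ?eqxx ?orbT //.
rewrite !rel_gap ?lexx ?(ltW lt_up) ?lt_qu ?lt_qp // (leNgt p) lt_qp (leNgt u) lt_qu /=.
by rewrite lerD2l lerD2l lerD2r ler_wpM2r // ?subr_ge0 ltW.
Qed.

Lemma lovasz_relabel_le z u :
  (exists k, z k = u) -> (exists k, u < z k) -> (exists k, z k < u) ->
  exists2 k, z k != u & lovasz F (relabel z u (z k)) <= lovasz F z.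
Proof.
case=> k0 zk0_u [kp lt_u_zkp] [kq lt_zkq_u].
set W := sort >=%R (undup (map z (enum T))).
have W_sorted : sorted >%R W.
  by rewrite gt_sorted_uniq_ge sort_uniq undup_uniq (sort_sorted ge_total).
have z_W k : z k \in W by rewrite mem_sort mem_undup map_f ?mem_enum.
have [w1 [p [q [w2 W_eq]]]] : exists w1 p q w2, W = w1 ++ [:: p, u, q & w2].
  apply: sorted_gt_neighbours W_sorted _ _ _; first by rewrite -zk0_u.
  - by exists (z kp).
  - by exists (z kq).
move: W_sorted z_W; rewrite W_eq => W_sorted z_W.
have [c [c_W c_u le_c]] := lovasz_relabel_step k0 W_sorted z_W.
move: c_W; rewrite -W_eq mem_sort mem_undup => /mapP[k _ c_eq].
by exists k; rewrite -c_eq.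
Qed.

Definition num_values (z : T -> R) : nat := size (undup (map z (enum T))).

Lemma num_values_relabel z u c : (exists k, z k = u) -> (exists k, z k = c) -> c != u ->
  (num_values (relabel z u c) < num_values z)%N.
Proof.
move=> [ku zku_u] [kc zkc_c] c_u.
have u_vals : u \in undup (map z (enum T)) by rewrite -zku_u mem_undup map_f ?mem_enum.
have sub : {subset undup (map (relabel z u c) (enum T)) <= rem u (undup (map z (enum T)))}.
  move=> v; rewrite mem_undup => /mapP[k _ ->].
  rewrite mem_rem_uniq ?undup_uniq // inE /relabel.
  have [_|zk_u] := eqVneq (z k) u; first by rewrite c_u -zkc_c mem_undup map_f ?mem_enum.
  by rewrite zk_u mem_undup map_f ?mem_enum.
rewrite /num_values; apply: leq_ltn_trans (uniq_leq_size (undup_uniq _) sub) _.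
by rewrite size_rem // ltn_predL; case: (undup _) u_vals.
Qed.

Lemma lovasz_round (A : pred T) z kmin kmax : kmin \in A -> kmax \in A ->
  (forall k, z kmin <= z k <= z kmax) ->
  exists z' : T -> R, [/\ {in A, z' =1 z}, forall k, exists2 k', k' \in A & z' k = z k'
                        & lovasz F z' <= lovasz F z].
Proof.
move=> A_kmin A_kmax; have [n] := ubnP (num_values z); elim: n z => // n IH z.
rewrite ltnS => le_n bounds.
have [all_A|] := boolP [forall k, [exists k' in A, z k == z k']].
  exists z; split => // k; move/forallP/(_ k)/existsP: all_A => [k' /andP[A_k' /eqP]].
  by exists k'.
rewrite negb_forall => /existsP[k]; rewrite negb_exists => /forallP new_k.
have z_A_neq k' : k' \in A -> z k' != z k by move=> A_k'; move: (new_k k'); rewrite A_k' eq_sym.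
have [k1 zk1_new le_z1] : exists2 k1, z k1 != z k & lovasz F (relabel z (z k) (z k1)) <= lovasz F z.
  apply: lovasz_relabel_le; first by exists k.
    by exists kmax; rewrite lt_neqAle eq_sym z_A_neq //; case/andP: (bounds k).
  by exists kmin; rewrite lt_neqAle z_A_neq //; case/andP: (bounds k).
set z1 := relabel z (z k) (z k1).
have z1_A : {in A, z1 =1 z} by move=> k' /z_A_neq; rewrite /z1 /relabel => /negbTE->.
have lt_z1 : (num_values z1 < n)%N.
  by apply: leq_trans le_n; apply: num_values_relabel; [exists k | exists k1 | ].
have bounds1 k' : z1 kmin <= z1 k' <= z1 kmax.
  by rewrite (z1_A _ A_kmin) (z1_A _ A_kmax) /z1 /relabel; case: ifP => _; apply: bounds.
have [z' [z'_A z'_vals le_z']] := IH z1 lt_z1 bounds1.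
exists z'; split => [k' A_k'|k'|]; first by rewrite z'_A ?z1_A.
  by have [k'' A_k'' ->] := z'_vals k'; exists k'' => //; rewrite z1_A.
exact: le_trans le_z' le_z1.
Qed.

Lemma lovasz_clamp_le (k0 : T) (Fnn : forall S, 0 <= F S) (FT : F setT = 0) z a b :
  lovasz F (fun k => Num.min (Num.max (z k) a) b) <= lovasz F z.
Proof.
set zc := fun k => _; apply: (ler_lovasz k0) => t.
have [lt_bt|le_tb] := ltP b t.
  suff -> : superlevel zc t = set0 by rewrite F0.
  by apply/setP => k; rewrite !inE le_min (leNgt t b) lt_bt andbF.
have [le_ta|lt_at] := leP t a.
  suff -> : superlevel zc t = setT by rewrite FT.
  by apply/setP => k; rewrite !inE le_min le_max le_tb le_ta orbT.
suff -> : superlevel zc t = superlevel z t by [].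
by apply/setP => k; rewrite !inE le_min le_tb andbT le_max (leNgt t a) lt_at orbF.
Qed.

End LovaszLevels.

Lemma proj_ab_box (R : realType) (M : nat) (a b : R) (xb : 'I_M -> R) :
  a <= b -> box a b (proj_ab a b xb).
Proof. by move=> le_ab j; rewrite /proj_ab le_min le_max lexx orbT le_ab ge_min lexx orbT. Qed.

Section BoxedLovasz.
Variables (R : realType) (N M : nat) (G : {set ('I_N + 'I_M)} -> R).
Hypothesis G0 : G set0 = 0.
Variables (x : 'I_N -> R) (a b : R).
Hypothesis x_ab : forall i, a <= x i <= b.

Lemma joinv_proj_ab (xb : 'I_M -> R) :
  joinv x (proj_ab a b xb) = (fun k => Num.min (Num.max (joinv x xb k) a) b).
Proof.
apply: boolp.funext => -[i|j] //=; have /andP[le_ax le_xb] := x_ab i.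
by rewrite max_l // min_l.
Qed.

Lemma gext_proj_le (i0 : 'I_N) (Gnn : forall S, 0 <= G S) (GT : G setT = 0) xb :
  gext G x (proj_ab a b xb) <= gext G x xb.
Proof. by rewrite /gext joinv_proj_ab; apply: (lovasz_clamp_le G0 (inl i0)). Qed.

Lemma gext_round (ia ib : 'I_N) : x ia = a -> x ib = b -> forall xb, box a b xb ->
  exists f : {ffun 'I_M -> 'I_N}, gext G x (fun j => x (f j)) <= gext G x xb.
Proof.
move=> x_ia x_ib xb xb_ab.
pose from_x := [pred k : 'I_N + 'I_M | if k is inl _ then true else false].
have bounds k : joinv x xb (inl ia) <= joinv x xb k <= joinv x xb (inl ib).
  by rewrite /= x_ia x_ib; case: k => [i|j] /=; [exact: x_ab | exact: xb_ab].
have [z' [z'_x z'_vals le_z']] :=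
  lovasz_round G0 (A := from_x) (kmin := inl ia) (kmax := inl ib) isT isT bounds.
pose f := [ffun j => odflt ia [pick i | x i == z' (inr j)]].
exists f; rewrite /gext; suff -> : joinv x (fun j => x (f j)) = z' by [].
apply: boolp.funext => -[i|j] /=; first by rewrite z'_x.
rewrite ffunE; case: pickP => [i /eqP //|no_i].
by have [[i _ /= z'_j|//]] := z'_vals (inr j); move: (no_i i); rewrite z'_j eqxx.
Qed.

End BoxedLovasz.

Unset Implicit Arguments.

Theorem lemma3 (R : realType) (N M : nat) (G : {set ('I_N + 'I_M)} -> R)
  (Gsub : submodular G) (Gnn : forall S, 0 <= G S)
  (G0 : G set0 = 0) (GT : G setT = 0)
  (x : 'I_N -> R) (a b : R)
  (ha : (forall i, a <= x i) /\ (exists i, x i = a))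
  (hb : (forall i, x i <= b) /\ (exists i, x i = b)) :
  (forall xb : 'I_M -> R, gext G x (proj_ab a b xb) <= gext G x xb) /\
  (forall a' b' : R, a' < a -> b < b' ->
     exists m : R,
       [/\ is_min_on (fun _ : 'I_M -> R => True) (gext G x) m,
           is_min_on (box a' b') (gext G x) m
         & is_min_on (box a b) (gext G x) m]).
Proof.
case: ha hb => le_ax [ia x_ia] [le_xb [ib x_ib]].
have x_ab i : a <= x i <= b by rewrite le_ax le_xb.
have proj_le := gext_proj_le G0 x_ab ia Gnn GT.
split=> // a' b' lt_a'a lt_bb'.
pose g_grid (f : {ffun 'I_M -> 'I_N}) := gext G x (fun j => x (f j)).
have [f_min _ f_minP] := arg_minP g_grid (isT : predT [ffun=> ia]).
have g_grid_min xb : g_grid f_min <= gext G x xb.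
  have xb_ab := proj_ab_box xb (le_trans (le_ax ia) (le_xb ia)).
  have [f le_f] := gext_round G0 x_ab x_ia x_ib xb_ab.
  exact: le_trans (f_minP f isT) (le_trans le_f (proj_le xb)).
exists (g_grid f_min); split; split=> [|y _]; try exact: g_grid_min;
  exists (fun j => x (f_min j)) => // j.
by rewrite (ltW (lt_le_trans lt_a'a (le_ax _))) (ltW (le_lt_trans (le_xb _) lt_bb')).
Qed.
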